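(* For every cardinal $\mu$ there exist a set of colours $C_\mu$ and an objective $W_\mu\subseteq C_\mu^\omega$ such that: (1) $W_\mu$ has ($\varepsilon$-free) memory $\le 2$; (2) the objective $W_\mu^\varepsilon\subseteq (C_\mu^\varepsilon)^\omega$, considered in games over $C_\mu^\varepsilon$-graphs, does not have ($\varepsilon$-free) memory $<\mu$; and consequently $W_\mu$ does not have $\varepsilon$-memory $<\mu$; (3) there is a cardinal $\kappa$ such that every monotone $(\kappa,W_\mu)$-universal $C_\mu$-graph contains an antichain of cardinality $\mu$.
   Context: For a set $D$ of colours: a $D$-graph $G$ is a vertex set $V(G)$ with edges $E(G)\subseteq V(G)\times D\times V(G)$, written $v\xrightarrow{c}v'$, every vertex having an outgoing edge; a $D$-tree is a $D$-graph with a root $t_0$ such that every vertex has a unique path from $t_0$. A morphism maps vertices so that edges go to edges of the same colour. An objective $W\subseteq D^\omega$; a vertex satisfies $W$ if all infinite paths from it have colour sequence in $W$. A $D$-game is $(G,V_{\mathrm{Eve}},v_0,W)$; a strategy is $(S,\pi,s_0)$ with $S$ a $D$-graph, $\pi:S\to G$ a morphism, $\pi(s_0)=v_0$, such that for all $v\notin V_{\mathrm{Eve}}$, $v\xrightarrow{c}v'\in E(G)$ and $s\in\pi^{-1}(v)$ there is $s'\in\pi^{-1}(v')$ with $s\xrightarrow{c}s'\in E(S)$; it is winning if $s_0$ satisfies $W$ in $S$. The objective has memory $\le\nu$ (resp. $<\nu$) if in every game with objective $W$ won by Eve (i.e. admitting a winning strategy) there is a winning strategy with $|\pi^{-1}(v)|\le\nu$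 (resp. $<\nu$) for all $v$. Let $\varepsilon$ be a fresh colour, $C^\varepsilon=C\sqcup\{\varepsilon\}$; $W^\varepsilon$ is the set of $w\in(C^\varepsilon)^\omega$ such that either $w_C$ (delete the $\varepsilon$'s) is infinite and in $W$, or $w_C$ is finite and $w_Cw'\in W$ for some $w'\in C^\omega$. An $\varepsilon$-strategy is a strategy with $V(S)\subseteq V(G)\times M$, $\pi(v,m)=v$, such that $(v,m)\xrightarrow{\varepsilon}(v',m')\in E(S)$ implies $m=m'$; its memory is $|M|$. $W$ has $\varepsilon$-memory $<\nu$ if every $C^\varepsilon$-game with objective $W^\varepsilon$ won by Eve is won by an $\varepsilon$-strategy of memory $<\nu$. A partially ordered graph $(G,\le)$ is monotone if $u\ge v\xrightarrow{c}v'\ge u'$ implies $u\xrightarrow{c}u'$. $G$ is $(\kappa,W)$-universal if every $D$-tree $T$ of cardinality $<\kappa$ with root $t_0$ admits a morphism $\phi:T\to G$ such that $\phi(t_0)$ satisfies $W$ whenever $t_0$ does. *)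

From mathcomp Require Import all_boot.
Set Implicit Arguments. Unset Strict Implicit. Unset Printing Implicit Defensive.

Record graph (D : Type) := Graph {
  vert : Type;
  edge : vert -> D -> vert -> Prop;
  edge_out : forall v, exists c v', edge v c v' }.
Arguments edge {D G} _ _ _ : rename.

Definition objective (D : Type) := (nat -> D) -> Prop.

Definition inf_path D (G : graph D) (v : vert G) (p : nat -> vert G) (w : nat -> D) :=
  p 0 = v /\ forall i, edge (p i) (w i) (p i.+1).

Definition satisfies D (G : graph D) (W : objective D) (v : vert G) :=
  forall p w, inf_path v p w -> W w.

Definition morphism D (G H : graph D) (f : vert G -> vert H) :=
  forall v c v', edge v c v' -> edge (f v) c (f v').

Record game (D : Type) := Game {
  arena : graph D;
  eve : vert arena -> Prop;
  init : vert arena;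
  obj : objective D }.

Record strategy D (g : game D) := Strategy {
  sgraph : graph D;
  proj : vert sgraph -> vert (arena g);
  sinit : vert sgraph;
  proj_morph : morphism proj;
  proj_init : proj sinit = init g;
  adam_closed : forall (v : vert (arena g)) c v' (s : vert sgraph),
      ~ eve v -> edge v c v' -> proj s = v ->
      exists s', proj s' = v' /\ edge s c s' }.

Arguments proj {D g} s _ : rename.
Arguments sinit {D g} s : rename.
Arguments sgraph {D g} s : rename.

Definition winning D (g : game D) (s : strategy g) : Prop :=
  satisfies (obj g) (sinit s).

Definition won_by_eve D (g : game D) : Prop := exists s : strategy g, winning s.

Definition card_le (A B : Type) : Prop := exists f : A -> B, injective f.
Definition card_lt (A B : Type) : Prop := card_le A B /\ ~ card_le B A.

Definition fibre D (g : game D) (s : strategy g) (v : vert (arena g)) : Type :=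
  { x : vert (sgraph s) | proj s x = v }.

Definition memory_le D (W : objective D) (N : Type) : Prop :=
  forall (G : graph D) (Eve : vert G -> Prop) (v0 : vert G),
    won_by_eve (Game Eve v0 W) ->
    exists s : strategy (Game Eve v0 W),
      winning s /\ forall v, card_le (fibre s v) N.

Definition memory_lt D (W : objective D) (N : Type) : Prop :=
  forall (G : graph D) (Eve : vert G -> Prop) (v0 : vert G),
    won_by_eve (Game Eve v0 W) ->
    exists s : strategy (Game Eve v0 W),
      winning s /\ forall v, card_lt (fibre s v) N.

(* C^eps = option C, with None playing the role of the fresh colour eps. *)
Definition erase C (w : nat -> option C) (n : nat) : seq C := pmap id (mkseq w n).

(* u extends the (finite or infinite) word w_C: every finite part of w_C is
   a prefix of u. *)
Definition erase_prefix_of C (w : nat -> option C) (u : nat -> C) : Prop :=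
  forall n, erase w n = mkseq u (size (erase w n)).

Definition eps_obj C (W : objective C) : objective (option C) := fun w =>
  (* w_C infinite and w_C in W *)
  ((forall k, exists n, k < size (erase w n)) /\
     exists u, W u /\ erase_prefix_of w u)
  \/
  (* w_C finite and w_C w' in W for some w' *)
  ((exists k, forall n, size (erase w n) <= k) /\
     exists u, W u /\ erase_prefix_of w u).

Definition eps_strategy C (g : game (option C)) (s : strategy g) (M : Type) : Prop :=
  exists iota : vert (sgraph s) -> (vert (arena g) * M)%type,
    injective iota /\
    (forall x, (iota x).1 = proj s x) /\
    (forall x x', edge x None x' -> (iota x).2 = (iota x').2).

Definition eps_memory_lt C (W : objective C) (N : Type) : Prop :=
  forall (G : graph (option C)) (Eve : vert G -> Prop) (v0 : vert G),
    won_by_eve (Game Eve v0 (eps_obj W)) ->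
    exists (M : Type) (s : strategy (Game Eve v0 (eps_obj W))),
      card_lt M N /\ eps_strategy s M /\ winning s.

Fixpoint fpath D (G : graph D) (u : vert G) (p : seq (D * vert G)) : Prop :=
  match p with
  | [::] => True
  | (c, v) :: p' => edge u c v /\ fpath v p'
  end.

Definition fpath_end D (G : graph D) (u : vert G) (p : seq (D * vert G)) : vert G :=
  last u (map snd p).

Definition is_tree D (T : graph D) (t0 : vert T) : Prop :=
  forall t : vert T, exists p, fpath t0 p /\ fpath_end t0 p = t /\
    forall q, fpath t0 q -> fpath_end t0 q = t -> q = p.

Definition universal D (K : Type) (W : objective D) (G : graph D) : Prop :=
  forall (T : graph D) (t0 : vert T), is_tree t0 -> card_lt (vert T) K ->
    exists phi : vert T -> vert G, morphism phi /\
      (satisfies W t0 -> satisfies W (phi t0)).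

Definition partial_order (V : Type) (le : V -> V -> Prop) : Prop :=
  (forall x, le x x) /\ (forall x y, le x y -> le y x -> x = y) /\
  (forall x y z, le x y -> le y z -> le x z).

Definition monotone D (G : graph D) (le : vert G -> vert G -> Prop) : Prop :=
  forall u v v' u' c, le v u -> edge v c v' -> le u' v' -> edge u c u'.

Definition has_antichain (V : Type) (le : V -> V -> Prop) (M : Type) : Prop :=
  exists f : M -> V, injective f /\
    forall x y, x <> y -> ~ le (f x) (f y).

(** Take for [W] the words over [C = M + bool] in which no letter is
    immediately repeated.

    Memory two suffices: a winning strategy tells, for every vertex and
    previous colour, whether Eve can still win; fixing one safe preferred
    colour per vertex, Eve only has to remember whether the colour just read
    is the preferred colour of the current vertex.

    With eps-edges the previous colour can be hidden: Adam reads a colour [c],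
    then silently offers a pair [{x, y}] of which Eve must read one, so the
    states of any winning strategy after reading [c] differ for different [c].

    For a universal graph, consider for each colour [n] the tree reading [n]
    twice and then branching into alternating branches, one for every colour
    other than [n]. If the images of the middle vertices of the trees for [x]
    and [y] were comparable, monotonicity would graft the [y]-branch of the
    [x]-tree after the [y]-edge of the [y]-tree, producing the factor [y y]. *)

From Pilot Require Import Defs.
From mathcomp Require Import all_boot.
From Stdlib Require Import Classical ClassicalEpsilon ProofIrrelevance.
Set Implicit Arguments. Unset Strict Implicit.

Definition no_repeat (C : Type) : objective C := fun w => forall i, w i <> w i.+1.

Definition prepend (T : Type) (x : T) (f : nat -> T) (i : nat) : T :=
  if i is k.+1 then f k else x.

Lemma exists_bool_iff (P : Prop) : exists b : bool, b <-> P.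
Proof. by case: (classic P) => h; [exists true | exists false]. Qed.

Lemma card_le_trans (A B C : Type) : card_le A B -> card_le B C -> card_le A C.
Proof. by case=> f f_inj [g g_inj]; exists (g \o f) => x y /g_inj /f_inj. Qed.

Lemma card_le_inl (A B : Type) : card_le A (A + B).
Proof. by exists inl => x y []. Qed.

Lemma cantor_card_lt (A : Type) : card_lt A (A -> Prop).
Proof.
split; first by exists (fun a b => b = a) => x y /(congr1 (fun P => P x)) e; rewrite -e.
case=> f f_inj; pose D a := exists P, f P = a /\ ~ P a.
have D_fD : ~ D (f D) by move=> DfD; case: (DfD) => P [/f_inj PD]; rewrite PD.
by apply: (D_fD); exists D.
Qed.

Section Paths.
Variables (D : Type) (G : graph D).

Lemma exists_inf_path (v : vert G) : exists p w, inf_path v p w.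
Proof.
have step u : exists x : D * vert G, edge u x.1 x.2.
  by case: (edge_out u) => c [u' e]; exists (c, u').
pose next u := proj1_sig (constructive_indefinite_description _ (step u)).
pose p i := iter i (fun u => (next u).2) v.
exists p, (fun i => (next (p i)).1); split=> // i.
exact: proj2_sig (constructive_indefinite_description _ (step _)).
Qed.

Lemma inf_path_prepend (v v' : vert G) c p w :
  edge v c v' -> inf_path v' p w -> inf_path v (prepend v p) (prepend c w).
Proof. by move=> e [p0 hp]; split=> // -[|i] /=; rewrite ?p0. Qed.

Lemma fpath_rcons (u : vert G) q c v :
  Defs.fpath u (rcons q (c, v)) <-> Defs.fpath u q /\ edge (fpath_end u q) c v.
Proof. by elim: q u => [|[c' v'] q IH] u /=; rewrite /fpath_end /= ?IH; tauto. Qed.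

Lemma fpath_end_rcons (u : vert G) q c v : fpath_end u (rcons q (c, v)) = v.
Proof. by rewrite /fpath_end map_rcons last_rcons. Qed.

End Paths.

Definition prev_colour (C : Type) (w : nat -> C) (i : nat) : option C :=
  if i is k.+1 then Some (w k) else None.

Section TwoStateStrategy.
Variables (C : Type) (G : graph C) (Eve : vert G -> Prop) (v0 : vert G).
Variable win : vert G -> option C -> Prop.

Definition step_ok (v : vert G) (o : option C) (d : C) (v' : vert G) :=
  [/\ edge v d v', win v' (Some d) & Some d <> o].

Hypothesis win_init : win v0 None.
Hypothesis win_eve : forall v o, win v o -> exists d v', step_ok v o d v'.
Hypothesis win_adam : forall v o d v', ~ Eve v -> win v o -> edge v d v' -> step_ok v o d v'.

Lemma colours_inhabited : inhabited C.
Proof. by case: (edge_out v0) => c _; exists. Qed.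

Definition safe_colour (v : vert G) (d : C) := exists v', edge v d v' /\ win v' (Some d).

Definition pref (v : vert G) : C := epsilon colours_inhabited (safe_colour v).

Lemma pref_safe v o : win v o -> safe_colour v (pref v).
Proof.
case/win_eve=> d [v' [e wv' _]]; apply: (epsilon_spec _ (safe_colour v)).
by exists d, v'.
Qed.

(* Eve plays her preferred colour unless it would repeat the colour just read. *)
Definition two_state_edge (x : vert G * bool) (d : C) (y : vert G * bool) :=
  [/\ edge x.1 d y.1, y.2 <-> d = pref y.1 &
      Eve x.1 -> forall o, win x.1 o -> (x.2 <-> o = Some (pref x.1)) -> step_ok x.1 o d y.1].

Lemma eve_two_state_move v (b : bool) : exists d v', edge v d v' /\
  forall o, win v o -> (b <-> o = Some (pref v)) -> step_ok v o d v'.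
Proof.
case: (edge_out v) => d_any [v_any e_any].
case: b.
- case: (classic (win v (Some (pref v)))) => [wv | nwv].
    case: (win_eve wv) => d [v' ok]; exists d, v'; split; first by case: ok.
    by move=> o _ [/(_ isT) -> _].
  by exists d_any, v_any; split=> // o wo [/(_ isT) eo _]; rewrite eo in wo.
- case: (classic (exists o, win v o)) => [[o /pref_safe [v' [e wv']]] | nwv].
    exists (pref v), v'; split=> // o' _ ho'; split=> // eo'.
    by case: ho' => _ /(_ (esym eo')).
  by exists d_any, v_any; split=> // o wo; case: nwv; exists o.
Qed.

Lemma two_state_edge_out x : exists d y, two_state_edge x d y.
Proof.
case: x => v b.
have [d [v' [e ok]]] : exists d v', edge v d v' /\ (Eve v -> forall o, win v o ->
    (b <-> o = Some (pref v)) -> step_ok v o d v').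
  case: (classic (Eve v)) => ev.
    by case: (eve_two_state_move v b) => d [v' [e ok]]; exists d, v'.
  by case: (edge_out v) => d [v' e]; exists d, v'.
by case: (exists_bool_iff (d = pref v')) => b' hb'; exists d, (v', b').
Qed.

Definition two_state_graph : graph C := Graph two_state_edge_out.

Lemma fst_morphism : @morphism C two_state_graph G fst.
Proof. by move=> x d y []. Qed.

Lemma two_state_adam_closed (v : vert G) c v' (x : vert two_state_graph) :
  ~ Eve v -> edge v c v' -> x.1 = v -> exists y, y.1 = v' /\ edge x c y.
Proof.
case: x => u b ne e /= hu; subst u.
case: (exists_bool_iff (c = pref v')) => b' hb'.
by exists (v', b'); split=> //; split.
Qed.

Definition two_state_strategy : strategy (Game Eve v0 (@no_repeat C)) :=
  @Strategy C (Game Eve v0 (@no_repeat C)) two_state_graph fst (v0, false)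
    fst_morphism erefl two_state_adam_closed.

Lemma two_state_step x d y o : two_state_edge x d y -> win x.1 o ->
  (x.2 <-> o = Some (pref x.1)) ->
  step_ok x.1 o d y.1 /\ (y.2 <-> Some d = Some (pref y.1)).
Proof.
case=> e hy hx wx bx; split.
  by case: (classic (Eve x.1)) => ev; [exact: hx | exact: win_adam].
by rewrite hy; split=> [-> | []].
Qed.

Lemma two_state_winning : winning two_state_strategy.
Proof.
move=> p w [p0 hp].
have inv i : win (p i).1 (prev_colour w i) /\
             ((p i).2 <-> prev_colour w i = Some (pref (p i).1)).
  elim: i => [|i [wi bi]]; first by rewrite p0.
  by case: (two_state_step (hp i) wi bi) => -[].
move=> i.
have [wi bi] := inv i.+1.
by case: (two_state_step (hp i.+1) wi bi) => -[_ _ /= neq] _ ew; apply: neq; rewrite ew.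
Qed.

Lemma two_state_fibre v : card_le (fibre two_state_strategy v) bool.
Proof.
exists (fun x => (proj1_sig x).2).
by case=> [[v1 b1] /= e1] [[v2 b2] /= e2] /= eb; subst.
Qed.

End TwoStateStrategy.

Section WinningAfter.
Variables (C : Type) (G : graph C) (Eve : vert G -> Prop) (v0 : vert G).
Variable S0 : strategy (Game Eve v0 (@no_repeat C)).
Hypothesis S0_winning : winning S0.

Definition safe_after (s : vert (sgraph S0)) (o : option C) :=
  forall p w, inf_path s p w -> no_repeat w /\ Some (w 0) <> o.

Definition win_after (v : vert G) (o : option C) :=
  exists s, proj S0 s = v /\ safe_after s o.

Lemma safe_after_edge s o d s' : safe_after s o -> edge s d s' ->
  safe_after s' (Some d) /\ Some d <> o.
Proof.
move=> safe_s e.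
have safe_prepend p w : inf_path s' p w -> no_repeat w /\ d <> w 0 /\ Some d <> o.
  case/(inf_path_prepend e)/safe_s => nr neq.
  by split=> [i | ]; [exact: nr i.+1 | split=> //; exact: nr 0].
split=> [p w /safe_prepend [nr [neq _]] | ]; first by split=> // -[] /esym.
by case: (exists_inf_path s') => p [w /safe_prepend [_ []]].
Qed.

Lemma win_after_init : win_after v0 None.
Proof. by exists (sinit S0); split; [exact: proj_init | move=> p w /S0_winning]. Qed.

Lemma win_after_eve v o : win_after v o -> exists d v', step_ok win_after v o d v'.
Proof.
case=> s [<- safe_s]; case: (edge_out s) => d [s' e].
case: (safe_after_edge safe_s e) => safe_s' neq.
by exists d, (proj S0 s'); split=> //; [exact: proj_morph | exists s'].
Qed.

Lemma win_after_adam v o d v' : ~ Eve v -> win_after v o -> edge v d v' ->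
  step_ok win_after v o d v'.
Proof.
move=> ne [s [ps safe_s]] e.
case: (@adam_closed _ _ S0 v d v' s ne e ps) => s' [ps' e'].
by case: (safe_after_edge safe_s e') => safe_s' neq; split=> //; exists s'.
Qed.

End WinningAfter.

Theorem no_repeat_memory_le (C : Type) : memory_le (@no_repeat C) bool.
Proof.
move=> G Eve v0 [S0 S0_winning].
exists (two_state_strategy Eve v0 (@win_after_eve _ _ _ _ S0)); split.
  by apply: two_state_winning; [exact: win_after_init | exact: win_after_adam].
exact: two_state_fibre.
Qed.

Lemma eps_obj_prefix (C : Type) (W : objective C) w :
  eps_obj W w -> exists u, W u /\ erase_prefix_of w u.
Proof. by case=> -[]. Qed.

Lemma erase_none_tail (C : Type) (w : nat -> option C) n :
  (forall k, n <= k -> w k = None) -> forall k, n <= k -> erase w k = erase w n.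
Proof.
move=> tail; elim=> [|k IH]; first by rewrite leqn0 => /eqP ->.
rewrite leq_eqVlt => /orP [/eqP -> // | lt_nk].
by rewrite /erase mkseqS -cats1 pmap_cat tail // cats0 -/(erase w k) IH.
Qed.

Lemma erase3 (C : Type) (w : nat -> option C) : erase w 3 = pmap id [:: w 0; w 1; w 2].
Proof. by []. Qed.

Section HubGame.
Variables (C : Type) (c1 c2 : C).
Hypothesis c1_neq_c2 : c1 <> c2.

Inductive hub_vertex := Start | Hub | Choice (x y : C) | Sink.

Definition hub_edge (u : hub_vertex) (e : option C) (v : hub_vertex) : Prop :=
  match u with
  | Start => v = Hub /\ exists c, e = Some c
  | Hub => e = None /\ exists x y, x <> y /\ v = Choice x y
  | Choice x y => v = Sink /\ (e = Some x \/ e = Some y)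
  | Sink => v = Sink /\ e = None
  end.

Lemma hub_edge_out u : exists e v, hub_edge u e v.
Proof.
case: u => [|| x y |].
- by exists (Some c1), Hub; split=> //; exists c1.
- by exists None, (Choice c1 c2); split=> //; exists c1, c2.
- by exists (Some x), Sink; split=> //; left.
- by exists None, Sink.
Qed.

Definition hub_graph : graph (option C) := Graph hub_edge_out.

Definition hub_eve (u : hub_vertex) : Prop := if u is Choice _ _ then True else False.

Definition hub_game : game (option C) :=
  @Game _ hub_graph hub_eve Start (eps_obj (@no_repeat C)).

Inductive memo_vertex := MStart | MHub (c : C) | MChoice (c x y : C) | MSink.

Definition memo_edge (u : memo_vertex) (e : option C) (v : memo_vertex) : Prop :=
  match u with
  | MStart => exists c, e = Some c /\ v = MHub c
  | MHub c => e = None /\ exists x y, x <> y /\ v = MChoice c x y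
  | MChoice c x y => [/\ v = MSink, e = Some x \/ e = Some y & x <> y -> e <> Some c]
  | MSink => v = MSink /\ e = None
  end.

Lemma memo_edge_out u : exists e v, memo_edge u e v.
Proof.
case: u => [| c | c x y |].
- by exists (Some c1), (MHub c1); exists c1.
- by exists None, (MChoice c c1 c2); split=> //; exists c1, c2.
- case: (classic (x = c)) => [-> | neq].
    by exists (Some y), MSink; split=> //; [right | move=> neq [/esym]].
  by exists (Some x), MSink; split=> //; [left | move=> _ []].
- by exists None, MSink.
Qed.

Definition memo_graph : graph (option C) := Graph memo_edge_out.

Definition forget (u : memo_vertex) : hub_vertex :=
  match u with
  | MStart => Start | MHub _ => Hub | MChoice _ x y => Choice x y | MSink => Sink
  end.

Lemma forget_morphism : @morphism _ memo_graph hub_graph forget.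
Proof.
case=> [| c | c x y |] e v /=.
- by case=> c [-> ->]; split=> //; exists c.
- by case=> -> [x [y [nxy ->]]]; split=> //; exists x, y.
- by case=> -> xy _.
- by case=> -> ->.
Qed.

Lemma forget_adam_closed (v : vert hub_graph) e v' (s : vert memo_graph) :
  ~ hub_eve v -> edge v e v' -> forget s = v -> exists s', forget s' = v' /\ edge s e s'.
Proof.
move=> ne ev fs; subst v; case: s ne ev => [| c | c x y |] //= _.
- by case=> -> [c ->]; exists (MHub c); split=> //; exists c.
- by case=> -> [x [y [nxy ->]]]; exists (MChoice c x y); split=> //; split=> //; exists x, y.
- by case=> -> ->; exists MSink.
Qed.

Definition memo_strategy : strategy hub_game :=
  @Strategy _ hub_game memo_graph forget MStart forget_morphism erefl forget_adam_closed.

Lemma memo_play_shape p w : inf_path (MStart : vert memo_graph) p w ->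
  exists c d, [/\ d <> c, w 0 = Some c, w 1 = None, w 2 = Some d &
                  forall k, 3 <= k -> w k = None].
Proof.
move=> [p0 hp].
have := hp 0; rewrite p0 => -[c [w0 p1]].
have := hp 1; rewrite p1 => -[w1 [x [y [nxy p2]]]].
have := hp 2; rewrite p2 => -[p3 xy /(_ nxy) nc].
have sink k : p k.+3 = MSink /\ w k.+3 = None.
  elim: k => [|k [pk _]]; first by have := hp 3; rewrite p3 => -[].
  by have := hp k.+3; rewrite pk => -[pk1 _]; have := hp k.+4; rewrite pk1 => -[].
have [d [w2 ndc]] : exists d, w 2 = Some d /\ d <> c.
  by case: xy => w2; [exists x | exists y]; split=> // e; apply: nc; rewrite w2 e.
exists c, d; split=> // -[|[|[|k]]] // _; exact: (sink k).2.
Qed.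

Lemma two_letter_word_eps_no_repeat (w : nat -> option C) c d :
  d <> c -> w 0 = Some c -> w 1 = None -> w 2 = Some d -> (forall k, 3 <= k -> w k = None) ->
  eps_obj (@no_repeat C) w.
Proof.
move=> ndc w0 w1 w2 tail.
have erase_w k : erase w k = if k is 0 then [::] else if k < 3 then [:: c] else [:: c; d].
  case: k => [|[|[|k]]]; try by rewrite /erase /= ?w0 ?w1.
  by rewrite (erase_none_tail tail) // erase3 w0 w1 w2.
right; split; first by exists 2 => k; rewrite erase_w; case: k => [|[|[|]]].
exists (fun i => if odd i then d else c); split=> [i | k].
  by rewrite /=; case: (odd i) => //=; apply: nesym.
by rewrite erase_w; case: k => [|[|[|]]].
Qed.

Lemma memo_strategy_winning : winning memo_strategy.
Proof.
move=> p w /memo_play_shape [c [d [ndc w0 w1 w2 tail]]].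
exact: two_letter_word_eps_no_repeat ndc w0 w1 w2 tail.
Qed.

Lemma hub_game_won : won_by_eve hub_game.
Proof. by exists memo_strategy; exact: memo_strategy_winning. Qed.

Lemma hub_state_after (s : strategy hub_game) c :
  exists t, proj s t = Hub /\ edge (sinit s) (Some c) t.
Proof.
have start_hub : @edge _ hub_graph Start (Some c) Hub by split=> //; exists c.
exact: (@adam_closed _ _ s Start (Some c) Hub (sinit s) id start_hub (proj_init s)).
Qed.

(* Adam answers [t] with the pair [{c, c'}]; whichever colour Eve reads
   repeats the first colour of one of the two histories ending in [t]. *)
Lemma hub_state_unique (s : strategy hub_game) : winning s ->
  forall c c' t, c <> c' -> proj s t = Hub ->
  edge (sinit s) (Some c) t -> edge (sinit s) (Some c') t -> False.
Proof.
move=> s_win c c' t ncc' pt et et'.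
have hub_choice : @edge _ hub_graph Hub None (Choice c c') by split=> //; exists c, c'.
case: (@adam_closed _ _ s Hub None (Choice c c') t id hub_choice pt) => t1 [pt1 et1].
case: (edge_out t1) => e [t2 et2].
have := proj_morph et2; rewrite pt1 => -[_ ez].
have [z [ez' etz]] : exists z, e = Some z /\ edge (sinit s) (Some z) t.
  by case: ez => ->; [exists c | exists c'].
subst e.
case: (exists_inf_path t2) => p [w /(inf_path_prepend et2)/(inf_path_prepend et1)].
move=> /(inf_path_prepend etz)/s_win/eps_obj_prefix [u [u_nr /(_ 3)]].
by rewrite erase3 /= => -[u0 u1]; apply: (u_nr 0); rewrite -u0 -u1.
Qed.

Lemma hub_fibre_card_ge (s : strategy hub_game) : winning s -> card_le C (fibre s Hub).
Proof.
move=> s_win; pose t c := constructive_indefinite_description _ (hub_state_after s c).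
exists (fun c => exist _ (proj1_sig (t c)) (proj1 (proj2_sig (t c))) : fibre s Hub).
move=> c c' /(congr1 (@proj1_sig _ _)) /= ett'.
case: (classic (c = c')) => // ncc'.
case: (proj2_sig (t c)) (proj2_sig (t c')) => pt et [_]; rewrite -ett' => et'.
by case: (hub_state_unique s_win ncc' pt et et').
Qed.

End HubGame.
Arguments Hub {C}.

Lemma eps_strategy_fibre_le (C : Type) (g : game (option C)) (s : strategy g) (M : Type) :
  eps_strategy s M -> forall v, card_le (fibre s v) M.
Proof.
case=> iota [iota_inj [iota_proj _]] v.
exists (fun x => (iota (proj1_sig x)).2) => -[x px] [y py] /= e.
have /iota_inj exy : iota x = iota y.
  by rewrite [iota x]surjective_pairing [iota y]surjective_pairing e !iota_proj px py.
by subst y; rewrite (proof_irrelevance _ px py).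
Qed.

Lemma no_repeat_eps_memory (M : Type) :
  ~ memory_lt (eps_obj (@no_repeat (M + bool))) M /\ ~ eps_memory_lt (@no_repeat (M + bool)) M.
Proof.
have ntf : (inr true : M + bool) <> inr false by [].
have M_le_fibre (s : strategy (hub_game ntf)) : winning s -> card_le M (fibre s Hub).
  move=> s_win; exact: (card_le_trans (card_le_inl M bool) (hub_fibre_card_ge s_win)).
split.
  by case/(_ _ _ _ (hub_game_won ntf)) => s [/M_le_fibre M_le fibre_lt]; case: (fibre_lt Hub).
case/(_ _ _ _ (hub_game_won ntf)) => Mem [s [[_ Mem_lt] [s_eps /M_le_fibre M_le]]].
by apply: Mem_lt; apply: card_le_trans M_le (eps_strategy_fibre_le s_eps _).
Qed.

Section ParentTree.
Variables (D V : Type) (root : V) (parent child : V -> V) (colour : V -> D) (depth : V -> nat).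
Hypothesis depth_eq0 : forall v, depth v = 0 <-> v = root.
Hypothesis depth_parent : forall v, v <> root -> depth v = (depth (parent v)).+1.
Hypothesis child_neq_root : forall v, child v <> root.
Hypothesis parentK : cancel child parent.

Definition parent_edge (u : V) (d : D) (v : V) := [/\ v <> root, u = parent v & d = colour v].

Lemma parent_edge_out u : exists d v, parent_edge u d v.
Proof. by exists (colour (child u)), (child u). Qed.

Definition parent_graph : graph D := Graph parent_edge_out.

Fixpoint path_from_root (k : nat) (t : V) : seq (D * V) :=
  if k is k'.+1 then rcons (path_from_root k' (parent t)) (colour t, t) else [::].

Lemma path_from_root_spec k t : depth t = k ->
  Defs.fpath (root : vert parent_graph) (path_from_root k t) /\
  fpath_end (root : vert parent_graph) (path_from_root k t) = t.
Proof.
elim: k t => [|k IH] t dt.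
  by move/depth_eq0: dt ->.
have nt : t <> root by move/depth_eq0; rewrite dt.
have [fp fe] : Defs.fpath (root : vert parent_graph) (path_from_root k (parent t)) /\
    fpath_end (root : vert parent_graph) (path_from_root k (parent t)) = parent t.
  by apply: IH; move: dt; rewrite depth_parent // => -[].
by rewrite /= fpath_rcons fpath_end_rcons fe.
Qed.

Lemma path_from_root_unique q t :
  Defs.fpath (root : vert parent_graph) q -> fpath_end (root : vert parent_graph) q = t ->
  q = path_from_root (depth t) t.
Proof.
elim/last_ind: q t => [|q [c v] IH] t.
  by rewrite /fpath_end /= => _ <-; rewrite (proj2 (depth_eq0 _)).
rewrite fpath_rcons fpath_end_rcons => -[fq [nv pv cv]] <-.
by rewrite depth_parent //= -cv -(IH _ fq pv).
Qed.

Lemma parent_graph_tree : is_tree (root : vert parent_graph).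
Proof.
move=> t; have [fp fe] := path_from_root_spec (erefl (depth t)).
by exists (path_from_root (depth t) t); split=> //; split=> // q; apply: path_from_root_unique.
Qed.

Lemma parent_graph_no_repeat (u : vert parent_graph) :
  (forall v, v <> root -> parent v <> root -> colour (parent v) <> colour v) ->
  satisfies (@no_repeat D) u.
Proof.
move=> colour_parent p w [_ hp] i.
have [np1 _ ->] := hp i; have [np2 pp ->] := hp i.+1.
by rewrite pp in np1 *; apply: colour_parent.
Qed.

End ParentTree.

Section SeparatingTrees.
Variables (C : Type) (c0 : C) (other : C -> C).
Hypothesis other_neq : forall c, other c <> c.

Inductive tree_vertex := TRoot | TMid | TBranch of C & nat.

Definition tparent (v : tree_vertex) : tree_vertex :=
  match v with
  | TRoot | TMid => TRoot
  | TBranch c 0 => TMid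
  | TBranch c k.+1 => TBranch c k
  end.

Definition tchild (v : tree_vertex) : tree_vertex :=
  match v with
  | TRoot => TMid
  | TMid => TBranch c0 0
  | TBranch c k => TBranch c k.+1
  end.

Definition tdepth (v : tree_vertex) : nat :=
  match v with TRoot => 0 | TMid => 1 | TBranch _ k => k.+2 end.

Definition avoid (n c : C) : C := if excluded_middle_informative (c = n) then other n else c.

Lemma avoid_neq n c : avoid n c <> n.
Proof. by rewrite /avoid; case: excluded_middle_informative => [e|ne] /=; first exact: other_neq. Qed.

Lemma avoid_id n c : c <> n -> avoid n c = c.
Proof. by rewrite /avoid; case: excluded_middle_informative. Qed.

(* [T n] reads [n] twice, then branches; [avoid] recolours the branch of [n],
   so every colour other than [n] starts some branch. *)
Definition tcolour (n : C) (v : tree_vertex) : C :=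
  match v with
  | TRoot | TMid => n
  | TBranch c k => if odd k then other (avoid n c) else avoid n c
  end.

Lemma tdepth_eq0 v : tdepth v = 0 <-> v = TRoot.
Proof. by case: v. Qed.

Lemma tdepth_parent v : v <> TRoot -> tdepth v = (tdepth (tparent v)).+1.
Proof. by case: v => [|| c [|k]]. Qed.

Lemma tchild_neq_root v : tchild v <> TRoot.
Proof. by case: v. Qed.

Lemma tchildK : cancel tchild tparent.
Proof. by case. Qed.

Definition T (n : C) : graph C := parent_graph (tcolour n) tchild_neq_root tchildK.

Lemma T_tree n : is_tree (TRoot : vert (T n)).
Proof. exact: (parent_graph_tree tdepth_eq0 tdepth_parent). Qed.

Lemma T_no_repeat n : satisfies (@no_repeat C) (TRoot : vert (T n)).
Proof.
apply: parent_graph_no_repeat => -[|| c [|k]] //= _ _.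
  exact/nesym/avoid_neq.
by case: (odd k) => /=; [apply: other_neq | apply/nesym/other_neq].
Qed.

Lemma T_mid_edge n c : c <> n -> @edge _ (T n) TMid c (TBranch c 0).
Proof. by move=> ncn; split=> //=; rewrite avoid_id. Qed.

Lemma T_root_edge n : @edge _ (T n) TRoot n TMid.
Proof. by []. Qed.

End SeparatingTrees.
Arguments TRoot {C}. Arguments TMid {C}.

Section MonotoneUniversal.
Variables (C : Type) (c0 : C) (other : C -> C).
Hypothesis other_neq : forall c, other c <> c.
Variables (G : graph C) (le : vert G -> vert G -> Prop).
Hypothesis le_refl : forall x, le x x.
Hypothesis le_monotone : monotone le.
Hypothesis G_universal : universal (tree_vertex C -> Prop) (@no_repeat C) G.

Lemma T_embedding n : exists phi : tree_vertex C -> vert G,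
  @morphism _ (T c0 other n) G phi /\ satisfies (@no_repeat C) (phi TRoot).
Proof.
case: (G_universal (@T_tree _ c0 other n) (cantor_card_lt _)) => phi [phi_morph phi_sat].
by exists phi; split=> //; apply: phi_sat; exact: T_no_repeat.
Qed.

Lemma universal_incomparable_mids :
  exists f : C -> vert G, forall x y, x <> y -> ~ le (f x) (f y).
Proof.
pose phi n := proj1_sig (constructive_indefinite_description _ (T_embedding n)).
have phiP n := proj2_sig (constructive_indefinite_description _ (T_embedding n)).
exists (fun n => phi n TMid) => x y nxy le_xy.
have [morph_x _] := phiP x; have [morph_y sat_y] := phiP y.
have e_mid : edge (phi y TMid) y (phi x (TBranch y 0)).
  exact: le_monotone le_xy (morph_x _ _ _ (@T_mid_edge _ c0 other x y (nesym nxy))) (le_refl _).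
have e_root : edge (phi y TRoot) y (phi y TMid).
  exact: morph_y _ _ _ (@T_root_edge _ c0 other y).
case: (exists_inf_path (phi x (TBranch y 0))) => p [w].
by move=> /(inf_path_prepend e_mid)/(inf_path_prepend e_root)/sat_y/(_ 0).
Qed.

End MonotoneUniversal.

Definition flip_colour (M : Type) (c : M + bool) : M + bool :=
  if c is inr b then inr (~~ b) else inr true.

Lemma flip_colour_neq (M : Type) (c : M + bool) : flip_colour c <> c.
Proof. by case: c => [m | []]. Qed.

Lemma monotone_universal_antichain (M : Type) (G : graph (M + bool))
    (le : vert G -> vert G -> Prop) :
  partial_order le -> monotone le ->
  universal (tree_vertex (M + bool) -> Prop) (@no_repeat _) G -> has_antichain le M.
Proof.
move=> [le_refl _] le_mono G_univ.
have [f f_incomp] :=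
  universal_incomparable_mids (inr true) (@flip_colour_neq M) le_refl le_mono G_univ.
exists (fun m => f (inl m)); split=> [m m' fmm' | m m' nmm'].
  case: (classic (m = m')) => // nmm'.
  by case: (f_incomp (inl m) (inl m')); [case | rewrite fmm'].
by apply: f_incomp; case.
Qed.

Theorem proposition5p1 :
  forall M : Type,
  exists (C : Type) (W : objective C),
    memory_le W bool /\
    (~ memory_lt (eps_obj W) M /\ ~ eps_memory_lt W M) /\
    exists K : Type,
      forall (G : graph C) (le : vert G -> vert G -> Prop),
        partial_order le -> monotone le -> universal K W G ->
        has_antichain le M.
Proof.
move=> M; exists (M + bool)%type, (@no_repeat _).
split; first exact: no_repeat_memory_le.
split; first exact: no_repeat_eps_memory.
by exists (tree_vertex (M + bool) -> Prop); exact: monotone_universal_antichain.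
Qed.
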